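(* Let $\mathcal N=(\mathcal L,\mathcal I,D_{\mathcal L})$ be a network (with a general collision profile) of character $D^*$. (i) If $S$ is a collision-free framed schedule of frame length $T_F\ge 3D^*+1$ whose rate vector $R_S$ exists, then $R_S\in(1-D^*/T_F)\,\widetilde{\mathcal R}^{(\mathcal L,\mathcal I)}$, and hence $R_S\in\widetilde{\mathcal R}^{(\mathcal L,\mathcal I)}$. (ii) For every $R\in\widetilde{\mathcal R}^{(\mathcal L,\mathcal I)}$ and every $\epsilon>0$ there exist a frame length $T_F$ and a collision-free framed schedule $S$ of frame length $T_F$ whose rate vector exists and satisfies $R_S(l)\ge R(l)-\epsilon$ for all $l$.
   Context: A network is a triple $\mathcal N=(\mathcal L,\mathcal I,D_{\mathcal L})$ where $\mathcal L$ is a finite nonempty set of links, each $\mathcal I(l)$ is a collection of nonempty subsets of $\mathcal L$, and $D_{\mathcal L}$ assigns an integer $D_{\mathcal L}(l,l')$ to every pair with $l'\in\phi$ for some $\phi\in\mathcal I(l)$. The character is $D^*=\max_{l}\max_{\phi\in\mathcal I(l)}\max_{l'\in\phi}|D_{\mathcal L}(l,l')|$ (0 if there are no collision sets). A schedule is a map $S:\mathcal L\times\mathbb Z\to\{0,1\}$; $S(l,t)$ has a collision if there is $\phi\in\mathcal I(l)$ with $S(l',t+D_{\mathcal L}(l,l'))=1$ for all $l'\in\phi$; $S$ is collision free if no $(l,t)$ with $S(l,t)=1$ has a collision. $R_S(l)=\lim_{T\to\infty}\frac1T\sum_{t=0}^{T-1}\iota\big(S(l,t)=1\text{ and collision free}\big)$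 when the limit exists; $R_S=(R_S(l))_l$ is the rate vector when all limits exist. For an integer $T_F\ge D^*+1$, a framed schedule of frame length $T_F$ is a schedule $S$ with $S(l,t)=0$ for $t<0$, such that for every $k\ge0$ and every $l$: $S(l,kT_F+i)=0$ for $i=T_F-D^*,\dots,T_F-1$, and the values $S(l,kT_F+i)$, $i=0,\dots,T_F-D^*-1$, are all equal. An independent set of $(\mathcal L,\mathcal I)$ is a subset $A\subseteq\mathcal L$ such that there are no $l\in A$ and $\phi\in\mathcal I(l)$ with $\phi\subseteq A$; $\widetilde{\mathcal R}^{(\mathcal L,\mathcal I)}$ is the convex hull of the indicator vectors (in $\mathbb R^{\mathcal L}$) of all independent sets of $(\mathcal L,\mathcal I)$. *)

From HB Require Import structures.
From mathcomp Require Import all_boot all_order all_algebra.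
From mathcomp Require Import all_classical all_reals all_analysis.
Set Implicit Arguments. Unset Strict Implicit. Unset Printing Implicit Defensive.
Import Order.TTheory GRing.Theory Num.Theory.
Import numFieldNormedType.Exports.
Local Open Scope classical_set_scope.
Local Open Scope ring_scope.

(* A network (L, I, D): links form the finite type L; I l is the collection of
   collision sets of l; D l l' is the integer delay (only meaningful when
   l' belongs to some collision set of l). *)

Definition character (L : finType) (I : L -> {set {set L}}) (D : L -> L -> int) : nat :=
  (\max_(l : L) \max_(phi in I l) \max_(l' in phi) `|D l l'|)%N.

Definition has_collision (L : finType) (I : L -> {set {set L}}) (D : L -> L -> int)
  (S : L -> int -> bool) (l : L) (t : int) : Prop :=
  exists2 phi, phi \in I l & forall l', l' \in phi -> S l' (t + D l l') = true.

Definition collision_free (L : finType) (I : L -> {set {set L}}) (D : L -> L -> int)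
  (S : L -> int -> bool) : Prop :=
  forall l t, S l t = true -> ~ has_collision I D S l t.

Definition success (L : finType) (I : L -> {set {set L}}) (D : L -> L -> int)
  (S : L -> int -> bool) (l : L) (t : int) : bool :=
  S l t && ~~ `[< has_collision I D S l t >].

Definition is_rate_vector (R : realType) (L : finType) (I : L -> {set {set L}})
  (D : L -> L -> int) (S : L -> int -> bool) (r : L -> R) : Prop :=
  forall l, (fun T : nat => T%:R^-1 * \sum_(t < T) (success I D S l (Posz t))%:R)
              @ \oo --> r l.

Definition framed (L : finType) (I : L -> {set {set L}}) (D : L -> L -> int)
  (TF : nat) (S : L -> int -> bool) : Prop :=
  let Ds := character I D in
  [/\ (Ds.+1 <= TF)%N,
      (forall l (t : int), t < 0 -> S l t = false),
      (forall l (k i : nat), (TF - Ds <= i < TF)%N -> S l (Posz (k * TF + i)) = false) &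
      (forall l (k i j : nat), (i < TF - Ds)%N -> (j < TF - Ds)%N ->
          S l (Posz (k * TF + i)) = S l (Posz (k * TF + j)))].

Definition independent (L : finType) (I : L -> {set {set L}}) (A : {set L}) : bool :=
  [forall l in A, forall phi in I l, ~~ (phi \subset A)].

Definition indep_hull (R : realType) (L : finType) (I : L -> {set {set L}})
  : set (L -> R) :=
  [set r | exists w : {set L} -> R,
     [/\ forall A, 0 <= w A,
         forall A, ~~ independent I A -> w A = 0,
         \sum_(A : {set L}) w A = 1 &
         forall l, r l = \sum_(A : {set L}) w A * (l \in A)%:R]].

From HB Require Import structures.
From mathcomp Require Import all_boot all_order all_algebra.
From mathcomp Require Import all_classical all_reals all_analysis.
From mathcomp Require Import ring lra zify.
Import Order.TTheory GRing.Theory Num.Theory.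
Import numFieldNormedType.Exports.
Local Open Scope classical_set_scope.
Local Open Scope ring_scope.
Set Implicit Arguments. Unset Strict Implicit. Unset Printing Implicit Defensive.

(* In frame [k] of a framed schedule the set of transmitting links
   is constant; call it the frame set.  Collision freedom forces every frame
   set to be independent: a collision at the slot [k TF + Ds] would only
   involve slots of the same frame, which are active when [3 Ds + 1 <= TF].
   The average rate over [m+1] whole frames equals [1 - Ds/TF] times the
   frequency vector of the frame sets, i.e. [1 - Ds/TF] times the marginal of
   their empirical distribution.  A subsequence of these empirical
   distributions converges (Bolzano-Weierstrass on the finitely many sets);
   its limit is a distribution on independent sets, which yields the point of
   the hull.  Scaling by [1 - Ds/TF] stays in the hull since [0] belongs to it.

   Round [N w] down for the weights [w] of the target point, list
   each independent set that many times and use the list cyclically as frame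
   sets of a schedule with frame length [N].  This schedule is collision free
   and periodic, so its rate is an exact frequency, which loses at most
   [(Ds + #|{set L}|) / N] against the target. *)

Lemma cvg_reindex (R : realType) (u : nat -> R) (a : R) (g : nat -> nat) :
  (forall n, (n <= g n)%N) -> u @ \oo --> a -> (u \o g) @ \oo --> a.
Proof.
move=> gn ua P /ua [N _ HN]; exists N => // n /= Hn; apply: HN => /=.
exact: leq_trans Hn (gn n).
Qed.

Lemma bounded_cvg_subseq (R : realType) (u : nat -> R) :
  (forall n, `|u n| <= 1) ->
  exists2 g : nat -> nat, (forall n, (n <= g n)%N) & cvgn (u \o g).
Proof.
move=> ub; have [|f f_incr fc] := bolzano_weierstrass (u_ := u).
  rewrite /bounded_near; near=> M => n _ /=; apply: le_trans (ub n) _.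
  by near: M; apply: nbhs_pinfty_ge.
exists f => //.
have fS n : (f n < f n.+1)%N.
  by rewrite ltnNge; apply/negP => h; have := f_incr n.+1 n; rewrite /Order.le /= h ltnn.
by elim=> [|n IH] //; exact: leq_ltn_trans IH (fS n).
Unshelve. all: by end_near.
Qed.

Lemma bounded_cvg_subseq_fin (R : realType) (J : finType) (u : J -> nat -> R) :
  (forall j n, `|u j n| <= 1) ->
  exists2 g : nat -> nat, (forall n, (n <= g n)%N) &
    exists W : J -> R, forall j, (u j \o g) @ \oo --> W j.
Proof.
move=> ub.
suff [g gn gc] : exists2 g : nat -> nat, (forall n, (n <= g n)%N) &
    forall j, j \in enum J -> cvgn (u j \o g).
  by exists g => //; exists (fun j => limn (u j \o g)) => j; apply: gc; rewrite mem_enum.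
elim: (enum J) => [|j0 s [g gn gc]]; first by exists id.
have [h hn hc] := @bounded_cvg_subseq R (u j0 \o g) (fun n => ub j0 (g n)).
exists (g \o h) => [n|j]; first exact: leq_trans (hn n) (gn _).
rewrite inE => /predU1P [->|js]; first exact: hc.
have /cvg_ex [a ua] := gc j js; apply/cvg_ex; exists a.
exact: cvg_reindex hn ua.
Qed.

Lemma cvg_ge0 (R : realType) (u : nat -> R) (a : R) :
  (forall n, 0 <= u n) -> u @ \oo --> a -> 0 <= a.
Proof.
move=> u0 ua; apply: (@closed_cvg nat R \oo _ u [set x | 0 <= x] (@closed_ge _ 0)) => //.
by exists 0%N => // n _; exact: u0.
Qed.

Lemma cvg_cst_eq (R : realType) (c a : R) : (fun _ : nat => c) @ \oo --> a -> a = c.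
Proof. by move=> /(cvg_lim (@Rhausdorff R)) <-; rewrite lim_cst. Qed.

Lemma sum_bool_le (b : nat -> bool) (m n : nat) : (\sum_(m <= t < n) b t <= n - m)%N.
Proof.
rewrite -[(n - m)%N]muln1 -sum_nat_const_nat.
by apply: leq_sum => t _; exact: leq_b1.
Qed.

Section Periodic.
Variables (b : nat -> bool) (P : nat).
Hypothesis b_periodic : forall t, b (t + P)%N = b t.

Lemma periodic_shift q t : b (t + q * P)%N = b t.
Proof.
elim: q => [|q IH]; first by rewrite addn0.
by rewrite mulSn addnCA addnC b_periodic.
Qed.

Lemma periodic_count (T : nat) :
  (\sum_(0 <= t < T) b t =
     (T %/ P) * \sum_(0 <= t < P) b t + \sum_(0 <= t < T %% P) b t)%N.
Proof.
have whole q : (\sum_(0 <= t < q * P) b t = q * \sum_(0 <= t < P) b t)%N.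
  elim: q => [|q IH]; first by rewrite mul0n big_geq.
  rewrite mulSn addnC (big_cat_nat (n := q * P)) ?leq_addr // IH.
  rewrite -{1}[(q * P)%N]add0n big_addn addKn mulSn addnC; congr (_ + _)%N.
  by apply: eq_bigr => t _; rewrite periodic_shift.
rewrite {1}(divn_eq T P) (big_cat_nat (n := (T %/ P * P)%N)) ?leq_addr // whole.
rewrite -{1}[(T %/ P * P)%N]add0n big_addn addKn; congr (_ + _)%N.
by apply: eq_bigr => t _; rewrite periodic_shift.
Qed.

Lemma periodic_average_cvg (R : realType) : (0 < P)%N ->
  (fun T : nat => T%:R^-1 * \sum_(t < T) (b t)%:R) @ \oo -->
    ((\sum_(0 <= t < P) b t)%N%:R / P%:R : R).
Proof.
move=> P0; apply/cvgrPdist_le => eps eps0.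
pose N := (Num.Def.archi_bound (P%:R / eps)).+1.
exists N => // T /= NT.
have Pr : 0 < P%:R :> R by rewrite ltr0n.
have Tr : 0 < T%:R :> R by rewrite ltr0n; apply: leq_trans NT.
rewrite -natr_sum -(big_mkord xpredT (fun t => (b t : nat))) (periodic_count T).
set s := (\sum_(0 <= t < P) b t)%N; set e := (\sum_(0 <= t < T %% P) b t)%N.
have sP : (s <= P)%N by rewrite -[P]subn0 sum_bool_le.
have eP : (e <= P)%N.
  by apply: leq_trans (sum_bool_le _ _ _) _; rewrite subn0 ltnW // ltn_pmod.
have Teq : T%:R = (T %/ P)%:R * P%:R + (T %% P)%:R :> R.
  by rewrite -natrM -natrD -divn_eq.
have -> : s%:R / P%:R - T%:R^-1 * ((T %/ P) * s + e)%N%:R =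
   ((s * (T %% P))%N%:R - (P * e)%N%:R) / (P%:R * T%:R) :> R.
  by rewrite natrD !natrM Teq; field; rewrite -Teq (gt_eqF Tr) (gt_eqF Pr).
have err_le : `|((s * (T %% P))%N%:R - (P * e)%N%:R : R)| <= P%:R * P%:R.
  have a1 : ((s * (T %% P))%N <= P * P)%N by rewrite leq_mul // ltnW // ltn_pmod.
  have a2 : ((P * e) <= P * P)%N by rewrite leq_mul.
  rewrite -natrM; move: a1 a2; rewrite -!(ler_nat R) => a1 a2.
  have b1 := ler0n R (s * (T %% P))%N; have b2 := ler0n R (P * e)%N.
  by rewrite ler_norml; apply/andP; split; lra.
have PT : P%:R <= eps * T%:R.
  have : P%:R / eps < T%:R.
    apply: lt_le_trans (archi_boundP (ltW (divr_gt0 Pr eps0))) _.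
    by rewrite ler_nat ltnW.
  by rewrite ltr_pdivrMr // mulrC => /ltW.
rewrite normrM normfV (gtr0_norm (mulr_gt0 Pr Tr)) ler_pdivrMr ?mulr_gt0 //.
nra.
Qed.

End Periodic.

Section Network.
Variables (L : finType) (I : L -> {set {set L}}) (D : L -> L -> int).
Local Notation Ds := (character I D).

Lemma delay_le_character l phi l' :
  phi \in I l -> l' \in phi -> (`|D l l'| <= Ds)%N.
Proof.
move=> phiI l'phi; rewrite /character.
apply: leq_trans (leq_bigmax_cond _ (erefl true : xpredT l)).
apply: leq_trans (leq_bigmax_cond _ phiI).
exact: (leq_bigmax_cond _ l'phi).
Qed.

Lemma success_collision_free S l t :
  collision_free I D S -> success I D S l t = S l t.
Proof.
move=> cf; rewrite /success; case St: (S l t) => //=.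
by rewrite asboolF //; exact: cf l t St.
Qed.

Lemma framed_count TF S l K : framed I D TF S ->
  (\sum_(0 <= t < K * TF) S l (Posz t) =
   (TF - Ds) * \sum_(0 <= k < K) S l (Posz (k * TF)))%N.
Proof.
case=> DsTF _ idle const.
elim: K => [|K IH]; first by rewrite mul0n !big_geq ?muln0.
rewrite mulSnr (big_cat_nat (n := (K * TF)%N)) ?leq_addr // IH /=.
rewrite -{1}[(K * TF)%N]add0n big_addn addKn.
rewrite (big_cat_nat (m := 0) (n := (TF - Ds)%N) (p := TF)) ?leq_subr //=.
rewrite (@eq_big_nat _ _ _ 0 (TF - Ds) _ (fun=> nat_of_bool (S l (Posz (K * TF))))); last first.
  by move=> i /andP[_ hi]; rewrite addnC (const l K i 0) ?addn0 //; lia.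
rewrite (@eq_big_nat _ _ _ (TF - Ds) TF _ (fun=> 0%N)); last first.
  by move=> i hi; rewrite addnC idle.
by rewrite !sum_nat_const_nat muln0 addn0 subn0 big_nat_recr //= mulnDr.
Qed.

Lemma independent_set0 : independent I finset.set0.
Proof. by apply/forallP => l; rewrite inE. Qed.

(* The hull contains 0 (the empty set is independent), hence is stable
   under scaling by [c] in [0, 1]. *)
Lemma indep_hull_scale (R : realType) (x : L -> R) (c : R) :
  indep_hull I x -> 0 <= c <= 1 -> indep_hull I (fun l => c * x l).
Proof.
move=> [w [w0 wi w1 wx]] /andP[c0 c1].
exists (fun A => c * w A + (1 - c) * (A == finset.set0)%:R); split.
- by move=> A; apply: addr_ge0; apply: mulr_ge0 => //; lra.
- move=> A hA; rewrite wi // mulr0 add0r.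
  case: eqP => [eA|]; last by rewrite mulr0.
  by move: hA; rewrite eA independent_set0.
- rewrite big_split /= -mulr_sumr w1 -mulr_sumr (bigD1 finset.set0) //= eqxx big1 ?addr0.
    by rewrite !mulr1; lra.
  by move=> A /negbTE ->.
- move=> l; rewrite wx mulr_sumr; apply: eq_bigr => A _.
  rewrite mulrDl mulrA; case: eqP => [->|]; last by rewrite mulr0 mul0r addr0.
  by rewrite finset.in_set0 !mulr0 addr0.
Qed.

End Network.

Section Empirical.
Variables (R : realType) (L : finType) (A : nat -> {set L}).

Definition empirical (n : nat) (B : {set L}) : R :=
  (n.+1)%:R^-1 * \sum_(k < n.+1) (A k == B)%:R.

Lemma empirical_ge0 n B : 0 <= empirical n B.
Proof. by rewrite mulr_ge0 // sumr_ge0. Qed.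

Lemma empirical_le1 n B : `|empirical n B| <= 1.
Proof.
rewrite ger0_norm ?empirical_ge0 // ler_pdivrMl ?ltr0n // mulr1 -natr_sum ler_nat.
by rewrite -[X in (_ <= X)%N]card_ord -sum1_card leq_sum // => k _; exact: leq_b1.
Qed.

Lemma empirical_sum n : \sum_B empirical n B = 1.
Proof.
rewrite /empirical -mulr_sumr exchange_big /= (eq_bigr (fun=> 1)); last first.
  move=> k _; rewrite (bigD1 (A k)) //= eqxx big1 ?addr0 //.
  by move=> B /negbTE; rewrite eq_sym => ->.
by rewrite sumr_const card_ord mulVf ?pnatr_eq0.
Qed.

Lemma empirical_marginal n l :
  \sum_B empirical n B * (l \in B)%:R = (n.+1)%:R^-1 * \sum_(k < n.+1) (l \in A k)%:R.
Proof.
under eq_bigr do rewrite /empirical -mulrA.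
rewrite -mulr_sumr; congr (_ * _).
under eq_bigr do rewrite mulr_suml.
rewrite exchange_big /=; apply: eq_bigr => k _.
rewrite (bigD1 (A k)) //= eqxx mul1r big1 ?addr0 //.
by move=> B /negbTE; rewrite eq_sym => ->; rewrite mul0r.
Qed.

Lemma empirical_limit_in_hull (I : L -> {set {set L}}) (g : nat -> nat) (W : {set L} -> R) :
  (forall k, independent I (A k)) ->
  (forall B, (fun n => empirical (g n) B) @ \oo --> W B) ->
  indep_hull I (fun l => \sum_B W B * (l \in B)%:R).
Proof.
move=> indA EW; exists W; split => //.
- by move=> B; apply: cvg_ge0 (EW B) => n; exact: empirical_ge0.
- move=> B hB; have := EW B.
  have -> : (fun n => empirical (g n) B) = fun=> 0.
    apply/funext => n; rewrite /empirical big1 ?mulr0 // => k _.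
    by case: eqP => // eB; move: hB; rewrite -eB indA.
  exact: cvg_cst_eq.
- have : (fun n => \sum_B empirical (g n) B) @ \oo --> \sum_B W B.
    by apply: cvg_big => //; exact: add_continuous.
  have -> : (fun n => \sum_B empirical (g n) B) = fun=> 1.
    by apply/funext => n; exact: empirical_sum.
  exact: cvg_cst_eq.
Qed.

End Empirical.

Section FramedRates.
Variables (R : realType) (L : finType) (I : L -> {set {set L}}) (D : L -> L -> int).
Variables (TF : nat) (S : L -> int -> bool).
Hypotheses (S_framed : framed I D TF S) (S_cf : collision_free I D S).
Local Notation Ds := (character I D).

Definition frame_set (k : nat) : {set L} := [set l | S l (Posz (k * TF))].

Lemma frame_set_active l k i : (i < TF - Ds)%N ->
  S l (Posz (k * TF + i)) = (l \in frame_set k).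
Proof.
have [_ _ _ const] := S_framed.
by move=> hi; rewrite inE (const l k i 0) ?addn0 //; lia.
Qed.

(* Every frame set is independent: a collision set [phi] of [l] inside
   [frame_set k] would make the transmission of [l] at slot [k TF + Ds]
   collide, since all delays are at most [Ds] and the slots
   [k TF, ..., k TF + 2 Ds] are active (this uses [3 Ds + 1 <= TF]). *)
Lemma frame_set_independent k : (3 * Ds + 1 <= TF)%N -> independent I (frame_set k).
Proof.
move=> hTF; apply/forallP => l; apply/implyP => lA.
apply/forallP => phi; apply/implyP => phiI; apply/negP => /fintype.subsetP sub.
have St : S l (Posz (k * TF + Ds)) by rewrite frame_set_active //; lia.
apply: (S_cf St); exists phi => // l' l'phi.
have hd := delay_le_character D phiI l'phi.
have -> : Posz (k * TF + Ds) + D l l' = Posz (k * TF + absz (Ds%:Z + D l l')) by lia.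
by rewrite frame_set_active; [exact: sub | lia].
Qed.

Lemma frame_average l m :
  ((m.+1 * TF)%N%:R^-1 * \sum_(t < m.+1 * TF) (success I D S l (Posz t))%:R : R) =
  (1 - Ds%:R / TF%:R) * ((m.+1)%:R^-1 * \sum_(k < m.+1) (l \in frame_set k)%:R).
Proof.
have [DsTF _ _ _] := S_framed.
under eq_bigr do rewrite success_collision_free //.
rewrite -natr_sum -(big_mkord xpredT (fun t => nat_of_bool (S l (Posz t)))).
rewrite (framed_count l m.+1 S_framed) big_mkord.
rewrite (eq_bigr (fun k : 'I_m.+1 => nat_of_bool (l \in frame_set k))); last first.
  by move=> k _; rewrite inE.
rewrite !natrM natr_sum natrB; last exact: ltnW.
have TF0 : TF%:R != 0 :> R by rewrite pnatr_eq0; lia.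
by field; rewrite TF0 andbT addrC natr1 pnatr_eq0.
Qed.

(* The point is
   the sum of the indicators of the frame sets weighted by a limit point of
   their empirical distributions. *)
Lemma framed_rate_in_scaled_hull (r : L -> R) :
  (3 * Ds + 1 <= TF)%N -> is_rate_vector I D S r ->
  exists2 x, indep_hull I x & forall l, r l = (1 - Ds%:R / TF%:R) * x l.
Proof.
move=> hTF rv.
have [g gn [W EW]] := bounded_cvg_subseq_fin
  (fun B n => @empirical_le1 R L frame_set n B).
exists (fun l => \sum_B W B * (l \in B)%:R).
  by apply: (empirical_limit_in_hull (A := frame_set) _ EW) => k; exact: frame_set_independent.
move=> l.
have frame_end n : (n <= (g n).+1 * TF)%N.
  by have := gn n; have [DsTF _ _ _] := S_framed; nia.
have rate_frames := cvg_reindex frame_end (rv l).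
have rate_eq : (fun T : nat => T%:R^-1 * \sum_(t < T) (success I D S l (Posz t))%:R) \o
    (fun n => ((g n).+1 * TF)%N) =
  (fun n => (1 - Ds%:R / TF%:R) * \sum_B empirical R frame_set (g n) B * (l \in B)%:R).
  by apply/funext => n /=; rewrite frame_average empirical_marginal.
rewrite rate_eq in rate_frames.
rewrite -(cvg_lim (@Rhausdorff R) rate_frames); apply: cvg_lim => //.
apply: cvgM; first exact: cvg_cst.
apply: cvg_big => [|B _]; first exact: add_continuous.
by apply: cvgM; [exact: EW | exact: cvg_cst].
Qed.

End FramedRates.

Section FrameSchedule.
Variables (L : finType) (I : L -> {set {set L}}) (D : L -> L -> int).
Variables (N : nat) (B : nat -> {set L}).
Local Notation Ds := (character I D).

Definition frame_schedule (l : L) (z : int) : bool :=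
  if z is Posz t then ((t %% N)%N < N - Ds)%N && (l \in B (t %/ N)%N) else false.

Lemma frame_schedule_slot l k i : (i < N)%N ->
  frame_schedule l (Posz (k * N + i)) = (i < N - Ds)%N && (l \in B k).
Proof.
by move=> iN /=; rewrite modnMDl modn_small // divnMDl ?divn_small ?addn0 //; lia.
Qed.

Lemma frame_schedule_framed : (Ds < N)%N -> framed I D N frame_schedule.
Proof.
move=> DsN; split => //.
- by move=> l [].
- by move=> l k i /andP[iDs iN]; rewrite frame_schedule_slot // ltnNge iDs.
- by move=> l k i j iN jN; rewrite !frame_schedule_slot ?iN ?jN //; lia.
Qed.

(* Two slots within distance [Ds] that are both active lie in the same
   frame, since every frame ends with [Ds] idle slots. *)
Lemma active_slots_same_frame (t t' : nat) (d : int) :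
  (`|d| <= Ds)%N -> Posz t + d = Posz t' ->
  ((t %% N)%N < N - Ds)%N -> ((t' %% N)%N < N - Ds)%N -> (t %/ N = t' %/ N)%N.
Proof.
move=> dDs tt' ht ht'.
have dt := divn_eq t N; have dt' := divn_eq t' N.
have hq1 : (t %/ N < t' %/ N)%N -> (t %/ N * N + N <= t' %/ N * N)%N.
  by move=> h; rewrite addnC -mulSn leq_mul2r h orbT.
have hq2 : (t' %/ N < t %/ N)%N -> (t' %/ N * N + N <= t %/ N * N)%N.
  by move=> h; rewrite addnC -mulSn leq_mul2r h orbT.
lia.
Qed.

(* If every frame set is independent, the schedule is collision free: the
   links of a collision set transmit in the frame of the collided slot. *)
Lemma frame_schedule_collision_free :
  (forall k, independent I (B k)) -> collision_free I D frame_schedule.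
Proof.
move=> indB l [t|t] //= /andP[ht lB] [phi phiI hcol].
have : phi \subset B (t %/ N)%N.
  apply/fintype.subsetP => l' l'phi.
  have := hcol l' l'phi; case E: (Posz t + D l l') => [t'|t'] //= /andP[ht' l'B].
  by rewrite (active_slots_same_frame (delay_le_character D phiI l'phi) E).
by move: (indB (t %/ N)%N) => /forallP /(_ l) /implyP /(_ lB) /forallP /(_ phi)
  /implyP /(_ phiI) /negP.
Qed.

Lemma frame_schedule_rate (R : realType) (P : nat) :
  (Ds < N)%N -> (0 < P)%N -> (forall k, B (k + P)%N = B k) ->
  (forall k, independent I (B k)) ->
  is_rate_vector I D frame_schedule (fun l =>
    ((N - Ds) * \sum_(0 <= k < P) (l \in B k))%N%:R / (P * N)%N%:R : R).
Proof.
move=> DsN P0 Bper indB l.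
have succ t : success I D frame_schedule l t = frame_schedule l t.
  by apply: success_collision_free; exact: frame_schedule_collision_free.
have -> : ((N - Ds) * \sum_(0 <= k < P) (l \in B k))%N =
    (\sum_(0 <= t < P * N) success I D frame_schedule l (Posz t))%N.
  under [RHS]eq_bigr do rewrite succ.
  rewrite (framed_count l P (frame_schedule_framed DsN)); congr (_ * _)%N.
  apply: eq_bigr => k _; rewrite -[(k * N)%N]addn0 frame_schedule_slot; last lia.
  by rewrite subn_gt0 DsN.
have PN : (0 < P * N)%N by rewrite muln_gt0 P0 (leq_ltn_trans (leq0n Ds) DsN).
apply: periodic_average_cvg PN => t.
rewrite !succ /= addnC modnMDl divnMDl; last exact: leq_ltn_trans (leq0n Ds) DsN.
by rewrite addnC Bper.
Qed.

End FrameSchedule.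

Section Rounding.
Variables (R : realType) (T : finType) (w : T -> R) (N : nat).
Hypotheses (w_ge0 : forall A, 0 <= w A) (w_sum1 : \sum_A w A = 1).

Definition multiplicity (A : T) : nat := Num.Def.trunc (N%:R * w A).
Definition rounded_seq : seq T :=
  flatten [seq nseq (multiplicity A) A | A <- enum T].

Lemma multiplicity_le A : (multiplicity A)%:R <= N%:R * w A.
Proof. by rewrite truncn_le mulr_ge0. Qed.

Lemma multiplicity_gt A : N%:R * w A < (multiplicity A).+1%:R.
Proof. by have /andP[] := truncn_itv (mulr_ge0 (ler0n R N) (w_ge0 A)). Qed.

Lemma sum_rounded_seq (F : T -> nat) :
  (\sum_(A <- rounded_seq) F A = \sum_A multiplicity A * F A)%N.
Proof.
rewrite big_flatten big_map big_enum /=; apply: eq_bigr => A _.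
by elim: (multiplicity A) => [|m IH]; rewrite ?big_nil // big_cons IH mulSn.
Qed.

Lemma size_rounded_seq : (size rounded_seq <= N)%N.
Proof.
rewrite -(ler_nat R) -sum1_size sum_rounded_seq natr_sum.
apply: le_trans (_ : \sum_A N%:R * w A <= _); last by rewrite -mulr_sumr w_sum1 mulr1.
by apply: ler_sum => A _; rewrite muln1 multiplicity_le.
Qed.

Lemma mem_rounded_seq A : A \in rounded_seq -> w A != 0.
Proof.
move=> /flattenP [s' /mapP [A' _ ->]]; rewrite mem_nseq => /andP[mA /eqP ->].
by apply: contraTneq mA => w0; rewrite /multiplicity w0 mulr0 truncn0.
Qed.

Lemma rounding_error (a : T -> R) : (forall A, 0 <= a A <= 1) ->
  N%:R * (\sum_A w A * a A) - #|T|%:R <= \sum_A (multiplicity A)%:R * a A.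
Proof.
move=> a01; rewrite mulr_sumr -sum1_card natr_sum -sumrB.
apply: ler_sum => A _; have /andP[a0 a1] := a01 A.
have := multiplicity_gt A; rewrite -natr1 mulrA => h; nra.
Qed.

End Rounding.

Lemma sum_nth_padded (T : Type) (x0 : T) (F : T -> nat) (s : seq T) (N : nat) :
  F x0 = 0%N -> (size s <= N)%N ->
  (\sum_(0 <= k < N) F (nth x0 s k) = \sum_(A <- s) F A)%N.
Proof.
move=> F0 sN; rewrite (big_nth x0) (big_cat_nat (n := size s)) //=.
rewrite [X in (_ + X)%N](@eq_big_nat _ _ _ (size s) N _ (fun=> 0%N)).
  by rewrite sum_nat_const_nat muln0 addn0.
by move=> i /andP[hi _]; rewrite nth_default.
Qed.

(* The arithmetic behind part (ii): with [n] slots per frame, [a] of them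
   idle, a rounding loss [k] on the frequency [Y] and [a + k <= e n], the
   rate [(n - a) Y / n^2] is within [e] of the target [X <= 1]. *)
Lemma rounded_rate_bound (R : realType) (X Y a k n e : R) :
  0 < n -> 0 <= a <= n -> 0 <= k -> X <= 1 ->
  n * X - k <= Y -> a + k <= e * n -> X - e <= (n - a) * Y / (n * n).
Proof.
move=> n0 /andP[a0 an] k0 X1 hY he; rewrite ler_pdivlMr ?mulr_gt0 //.
have h1 : 0 <= (n - a) * (Y - (n * X - k)) by apply: mulr_ge0; lra.
have h2 : 0 <= a * n * (1 - X) by apply: mulr_ge0; [apply: mulr_ge0; lra | lra].
have h3 : 0 <= a * k by apply: mulr_ge0.
have h4 : 0 <= n * (e * n - (a + k)) by apply: mulr_ge0; lra.
nra.
Qed.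

(* Frame [k] uses the
   [k mod N]-th entry of the rounded list of independent sets, where [N] is
   large compared to [Ds] and the number of sets. *)
Lemma framed_rates_approximate (R : realType) (L : finType) (I : L -> {set {set L}})
  (D : L -> L -> int) (x : L -> R) (eps : R) :
  indep_hull I x -> 0 < eps ->
  exists (TF : nat) (S : L -> int -> bool) (r : L -> R),
    [/\ framed I D TF S, collision_free I D S, is_rate_vector I D S r &
        forall l, x l - eps <= r l].
Proof.
move=> [w [w0 wi w1 wx]] eps0.
set Ds := character I D; set K := #|{set L}|.
pose M := Num.Def.archi_bound ((Ds + K)%:R / eps).
have hM : (Ds + K)%:R / eps < M%:R :> R.
  by apply: archi_boundP; apply: divr_ge0 => //; exact: ltW.
pose N := (M + Ds).+1.
have DsN : (Ds < N)%N by rewrite /N; lia.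
pose s := rounded_seq w N.
pose B (k : nat) := nth finset.set0 s (k %% N).
(* Listed sets have positive weight, hence are independent. *)
have indB k : independent I (B k).
  rewrite /B; case: (ltnP (k %% N) (size s)) => h; last first.
    by rewrite nth_default // independent_set0.
  have /mem_rounded_seq := mem_nth finset.set0 h.
  by apply: contraNT => /wi ->.
have Bper k : B (k + N)%N = B k by rewrite /B modnDr.
have freq l : (\sum_(0 <= k < N) (l \in B k) = \sum_A multiplicity w N A * (l \in A))%N.
  rewrite -(sum_rounded_seq w N (fun A => nat_of_bool (l \in A))).
  rewrite -(sum_nth_padded (x0 := finset.set0) _ (size_rounded_seq N w0 w1));
    last by rewrite finset.in_set0.
  by apply: eq_big_nat => k /andP[_ kN]; rewrite /B modn_small.
exists N, (frame_schedule I D N B); eexists; split.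
- exact: frame_schedule_framed.
- exact: frame_schedule_collision_free.
- exact: (frame_schedule_rate (P := N) DsN (ltn0Sn _) Bper indB).
move=> l /=; rewrite freq natrM natrB ?(ltnW DsN) // natrM.
apply: (rounded_rate_bound (k := K%:R)) => //.
- by rewrite ler0n ler_nat ltnW.
- rewrite wx; apply: le_trans (_ : \sum_A w A <= 1); last by rewrite w1.
  by apply: ler_sum => A _; rewrite ler_piMr //; case: (l \in A); rewrite ?ler01.
- rewrite natr_sum wx; under eq_bigr do rewrite natrM.
  by apply: (rounding_error N w0) => A; case: (l \in A); rewrite ?ler01 ?lexx.
- rewrite -natrD; move: hM; rewrite ltr_pdivrMr // => h; apply: ltW.
  apply: lt_le_trans h _; rewrite mulrC ler_wpM2l //; first exact: ltW.
  by rewrite ler_nat /N; lia.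
Qed.

Theorem theorem3 (R : realType) (L : finType) (I : L -> {set {set L}})
  (D : L -> L -> int)
  (L_nonempty : (0 < #|L|)%N)
  (I_nonempty : forall l phi, phi \in I l -> (0 < #|phi|)%N) :
  (forall (TF : nat) (S : L -> int -> bool) (r : L -> R),
     (3 * character I D + 1 <= TF)%N ->
     framed I D TF S -> collision_free I D S -> is_rate_vector I D S r ->
     (exists2 x, @indep_hull R L I x &
        forall l, r l = (1 - (character I D)%:R / TF%:R) * x l)
     /\ @indep_hull R L I r)
  /\
  (forall (x : L -> R) (eps : R), @indep_hull R L I x -> 0 < eps ->
     exists (TF : nat) (S : L -> int -> bool) (r : L -> R),
       [/\ framed I D TF S, collision_free I D S, is_rate_vector I D S r &
           forall l, x l - eps <= r l]).
Proof.
split=> [TF S r hTF fr cf rv | x eps]; last exact: framed_rates_approximate.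
have [x hx rx] := framed_rate_in_scaled_hull fr cf hTF rv.
split; first by exists x.
have -> : r = fun l => (1 - (character I D)%:R / TF%:R) * x l by apply/funext.
apply: indep_hull_scale => //.
have TF0 : (0 < TF)%N by lia.
rewrite subr_ge0 lerBlDr lerDl divr_ge0 ?ler0n // andbT.
by rewrite ler_pdivrMr ?ltr0n // mul1r ler_nat; lia.
Qed.
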